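(* Let $A$ be an $n\times n$ Dickson matrix over $\mathbb{F}_{q^n}$ such that $\mathrm{rank}\big(A+\mathrm{diag}(d,d^q,\dots,d^{q^{n-1}})\big)=1$ for some $d\in\mathbb{F}_{q^n}$, and let $B$ be a Dickson matrix such that $A$ and $B$ have equal corresponding principal minors of all orders. Then $A$ is diagonally similar to $B$.
   Context: A Dickson matrix is the $n\times n$ matrix indexed by $\mathbb{Z}_n$ with $A[i|j]=a_{j-i}^{q^i}$ associated to a $q$-polynomial $\sum_{j=0}^{n-1}a_jx^{q^j}\in\mathbb{F}_{q^n}[x]$. Equal corresponding principal minors: $\det A[\alpha|\alpha]=\det B[\alpha|\alpha]$ for all nonempty $\alpha\subseteq\mathbb{Z}_n$. Diagonally similar: $B=D^{-1}AD$ for an invertible diagonal matrix $D$. *)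

From HB Require Import structures.
From mathcomp Require Import all_boot all_order all_algebra all_field.
Set Implicit Arguments. Unset Strict Implicit. Unset Printing Implicit Defensive.
Import GRing.Theory.
Local Open Scope ring_scope.

(* Dickson matrix of the q-polynomial sum_{j<n} a_j x^{q^j} over L:
   rows/columns indexed by Z_n (here 'I_n), entry (i,j) = a_{(j-i) mod n}^{q^i}.
   Only a_0, ..., a_{n-1} are used. *)
Definition dickson_mx (L : fieldType) (q n : nat) (a : nat -> L) : 'M[L]_n :=
  \matrix_(i < n, j < n) (a (((j + n) - i) %% n)%N) ^+ (q ^ i).

Definition is_dickson (L : fieldType) (q n : nat) (A : 'M[L]_n) : Prop :=
  exists a : nat -> L, A = dickson_mx q n a.

Definition principal_submx (L : fieldType) (n : nat) (A : 'M[L]_n)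
  (alpha : {set 'I_n}) : 'M[L]_#|alpha| :=
  mxsub (fun i : 'I_#|alpha| => enum_val i) (fun j : 'I_#|alpha| => enum_val j) A.

Definition principal_minor (L : fieldType) (n : nat) (A : 'M[L]_n)
  (alpha : {set 'I_n}) : L := \det (principal_submx A alpha).

Definition equal_principal_minors (L : fieldType) (n : nat) (A B : 'M[L]_n) : Prop :=
  forall alpha : {set 'I_n}, alpha != set0 ->
    principal_minor A alpha = principal_minor B alpha.

Definition diag_similar (L : fieldType) (n : nat) (A B : 'M[L]_n) : Prop :=
  exists d : 'rV[L]_n, (forall i, d 0 i != 0) /\
    B = invmx (diag_mx d) *m A *m diag_mx d.

(* Write A + diag(d^(q^i)) = u v^T.  This matrix is again a Dickson matrix, so each of its rows and
   columns contains all of its coefficients; hence u and v have no zero entry, the off-diagonal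
   entries A_ij = u_i v_j are nonzero, and each 3-cycle product of A equals the reversed one.
   Principal minors of orders 1 and 2 give equal diagonals and equal 2-cycle products B_ij B_ji;
   those of order 3 then force the 3-cycle products of B to equal those of A.  The diagonal matrix
   with entries B_0j / A_0j now conjugates A into B. *)
From HB Require Import structures.
From mathcomp Require Import all_boot all_order all_fingroup all_algebra all_solvable all_field.
From mathcomp Require Import ring zify.
Import GRing.Theory.
Local Open Scope ring_scope.
Set Implicit Arguments. Unset Strict Implicit. Unset Printing Implicit Defensive.

Lemma pchar_nat_of_card_expn (L : finFieldType) (q n : nat) :
  (0 < n)%N -> #|L| = (q ^ n)%N -> [pchar L].-nat q.
Proof.
move=> n_gt0 cardL; have [p p_pr pcharLp] := finPcharP L.
have : p.-nat #|L| by rewrite -cardsT; exact/abelem_pgroup/fin_ring_pchar_abelem.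
rewrite (eq_pnat _ (pcharf_eq pcharLp)) cardL pnatX => /orP[//|].
by rewrite eqn0Ngt n_gt0.
Qed.

Lemma eq_of_sum_prod_square (R : idomainType) (x y z : R) :
  x + y = z + z -> x * y = z * z -> x = z.
Proof.
move=> sum_xy prod_xy; apply/eqP; rewrite -subr_eq0 -sqrf_eq0; apply/eqP.
transitivity (x * (x + y) - x * y - (z + z) * x + z * z); first by ring.
by rewrite sum_xy prod_xy; ring.
Qed.

Lemma det_mx22 (R : comNzRingType) (M : 'M[R]_2) :
  \det M = M 0 0 * M 1 1 - M 0 1 * M 1 0.
Proof.
(* Reindexing through [inord] lets the lifted indices of the cofactors compute to numerals. *)
have -> : M = \matrix_(i, j) M (inord i) (inord j).
  by apply/matrixP => i j; rewrite mxE !inord_val.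
by rewrite (expand_det_row _ 0) !big_ord_recl big_ord0 /cofactor !det_mx11 !mxE /=; ring.
Qed.

Lemma det_mx33 (R : comNzRingType) (M : 'M[R]_3) :
  \det M = M 0 0 * M 1 1 * M 2 2 + M 0 1 * M 1 2 * M 2 0 + M 0 2 * M 1 0 * M 2 1
         - M 0 0 * M 1 2 * M 2 1 - M 0 1 * M 1 0 * M 2 2 - M 0 2 * M 1 1 * M 2 0.
Proof.
have -> : M = \matrix_(i, j) M (inord i) (inord j).
  by apply/matrixP => i j; rewrite mxE !inord_val.
by rewrite (expand_det_row _ 0) !big_ord_recl big_ord0 /cofactor !det_mx22 !mxE /=; ring.
Qed.

Lemma rank1_factor (F : fieldType) (m n : nat) (C : 'M[F]_(m, n)) :
  \rank C = 1%N -> exists u v, forall i j, C i j = u i * v j.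
Proof.
move=> rankC; rewrite -(mulmx_base C).
move: (col_base C) (row_base C); rewrite rankC => X Y.
by exists (X^~ 0), (Y 0) => i j; rewrite mxE big_ord1.
Qed.

Section PrincipalMinors.
Variables (L : fieldType) (n : nat) (A : 'M[L]_n).

Lemma principal_minor1 i : principal_minor A [set i] = A i i.
Proof.
rewrite /principal_minor /principal_submx.
move: (enum_val (A:=[set i])) (@enum_valP _ [set i]); rewrite cards1 => f f_i.
by rewrite det_mx11 mxE; have /set1P -> := f_i 0.
Qed.

Lemma principal_minor2 i j : i != j ->
  principal_minor A [set i; j] = A i i * A j j - A i j * A j i.
Proof.
move=> neq_ij; rewrite /principal_minor /principal_submx.
move: (enum_val (A:=[set i; j])) (@enum_val_inj _ [set i; j]) (@enum_valP _ [set i; j]).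
rewrite cards2 neq_ij => f f_inj f_ij; rewrite det_mx22 !mxE.
have : f 0 != f 1 by rewrite (inj_eq f_inj).
by move: (f_ij 0) (f_ij 1); rewrite !inE => /orP[]/eqP-> /orP[]/eqP->;
  rewrite ?eqxx // => _; ring.
Qed.

Lemma principal_minor3 i j l : i != j -> i != l -> j != l ->
  principal_minor A [set i; j; l] =
    A i i * A j j * A l l + A i j * A j l * A l i + A i l * A l j * A j i
  - A i i * A j l * A l j - A j j * A i l * A l i - A l l * A i j * A j i.
Proof.
move=> neq_ij neq_il neq_jl; rewrite /principal_minor /principal_submx.
set S := [set i; j; l].
have cardS : #|S| = 3%N.
  by rewrite /S -setUA !cardsU1 cards1 !inE (negbTE neq_ij) (negbTE neq_il) (negbTE neq_jl).
move: (enum_val (A:=S)) (@enum_val_inj _ S) (@enum_valP _ S); rewrite cardS.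
move=> f f_inj f_S; rewrite det_mx33 !mxE.
have f01 : f 0 != f 1 by rewrite (inj_eq f_inj).
have f02 : f 0 != f 2 by rewrite (inj_eq f_inj).
have f12 : f 1 != f 2 by rewrite (inj_eq f_inj).
move: (f_S 0) (f_S 1) (f_S 2) f01 f02 f12; rewrite !inE -!orbA.
by case/or3P=> /eqP-> /or3P[]/eqP-> /or3P[]/eqP->; rewrite ?eqxx //= => _ _ _; ring.
Qed.

End PrincipalMinors.

Section EqualPrincipalMinors.
Variables (L : fieldType) (n : nat) (A B : 'M[L]_n).
Hypothesis eqAB : equal_principal_minors A B.

Lemma eq_diag_of_principal_minors i : B i i = A i i.
Proof.
have /eqAB : [set i] != set0 by apply/set0Pn; exists i; rewrite inE.
by rewrite !principal_minor1.
Qed.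

Lemma eq_cycle2_of_principal_minors i j : i != j -> B i j * B j i = A i j * A j i.
Proof.
move=> neq_ij; have /eqAB : [set i; j] != set0 by apply/set0Pn; exists i; rewrite !inE eqxx.
by rewrite !principal_minor2 // !eq_diag_of_principal_minors => /addrI/oppr_inj.
Qed.

(* The order-3 minors only give the sum of the two cycle products of B; their product is
   fixed by the 2-cycle products, so when A's two cycle products agree both of B's equal them. *)
Lemma eq_cycle3_of_principal_minors i j l : i != j -> i != l -> j != l ->
  A i l * A l j * A j i = A i j * A j l * A l i ->
  B i j * B j l * B l i = A i j * A j l * A l i.
Proof.
move=> neq_ij neq_il neq_jl symA.
have cyc2 := eq_cycle2_of_principal_minors.
set S := [set i; j; l].
have /eqAB eq3 : S != set0 by apply/set0Pn; exists i; rewrite !inE eqxx.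
have sum_cycles : B i j * B j l * B l i + B i l * B l j * B j i
                = A i j * A j l * A l i + A i l * A l j * A j i.
  apply/eqP; rewrite -subr_eq0; apply/eqP.
  transitivity (principal_minor B S - principal_minor A S); last by rewrite eq3 subrr.
  rewrite !principal_minor3 // !eq_diag_of_principal_minors.
  rewrite -[A j j * B i l * B l i]mulrA -[A i i * B j l * B l j]mulrA.
  by rewrite -[A l l * B i j * B j i]mulrA !cyc2 //; ring.
apply: (eq_of_sum_prod_square (y := B i l * B l j * B j i)); first by rewrite sum_cycles symA.
have -> : B i j * B j l * B l i * (B i l * B l j * B j i)
        = (B i j * B j i) * (B j l * B l j) * (B i l * B l i) by ring.
by rewrite !cyc2 // -[X in _ = X * _]symA; ring.
Qed.

End EqualPrincipalMinors.

Section DicksonMatrix.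
Variables (L : fieldType) (q n : nat).

Lemma dickson_idx_eq0 (i j : 'I_n) : (((j + n - i) %% n == 0) = (i == j))%N.
Proof.
have hi := ltn_ord i; have hj := ltn_ord j.
apply/eqP/eqP => [|<-]; last by rewrite addKn modnn.
move=> idx0; apply/val_inj => /=; have [le_ij | lt_ji] := leqP i j.
  by move: idx0; rewrite (_ : j + n - i = j - i + n)%N ?modnDr ?modn_small; lia.
by move: idx0; rewrite modn_small; lia.
Qed.

Lemma dickson_idx_row (i : 'I_n) k : (k < n -> ((i + k) %% n + n - i) %% n = k)%N.
Proof.
have hi := ltn_ord i; move=> hk; have [lt_ikn | le_nik] := ltnP (i + k) n.
  by rewrite (modn_small lt_ikn) -addnA addKn modnDr modn_small.
have -> : ((i + k) %% n = i + k - n)%N.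
  by rewrite -{1}(subnK le_nik) modnDr modn_small //; lia.
by rewrite (_ : i + k - n + n - i = k)%N ?modn_small //; lia.
Qed.

Lemma dickson_idx_col (j : 'I_n) k : (k < n -> (j + n - (j + n - k) %% n) %% n = k)%N.
Proof.
have hj := ltn_ord j; move=> hk; have [le_kj | lt_jk] := leqP k j.
  rewrite (_ : j + n - k = j - k + n)%N; last by lia.
  rewrite modnDr (modn_small (_ : j - k < n)%N); last by lia.
  by rewrite (_ : j + n - (j - k) = k + n)%N ?modnDr ?modn_small //; lia.
rewrite (modn_small (_ : j + n - k < n)%N); last by lia.
by rewrite (_ : j + n - (j + n - k) = k)%N ?modn_small //; lia.
Qed.

Hypothesis q_gt0 : (0 < q)%N.

Lemma dickson_mx_entry_eq0 (c : nat -> L) i j :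
  (dickson_mx q n c i j == 0) = (c ((j + n - i) %% n)%N == 0).
Proof. by rewrite mxE expf_eq0 expn_gt0 q_gt0. Qed.

Lemma dickson_mx_eq0 (c : nat -> L) :
  (forall k, (k < n)%N -> c k = 0) -> dickson_mx q n c = 0.
Proof.
move=> c0; apply/matrixP => i j; rewrite [RHS]mxE; apply/eqP.
by rewrite dickson_mx_entry_eq0 c0 ?eqxx // ltn_pmod // (leq_ltn_trans _ (ltn_ord i)).
Qed.

Lemma dickson_mx_row_eq0 (c : nat -> L) (i : 'I_n) :
  (forall j, dickson_mx q n c i j = 0) -> dickson_mx q n c = 0.
Proof.
move=> row0; apply: dickson_mx_eq0 => k lt_kn.
have n_gt0 : (0 < n)%N by apply: leq_ltn_trans (ltn_ord i).
have /eqP := row0 (Ordinal (ltn_pmod (i + k) n_gt0)).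
by rewrite dickson_mx_entry_eq0 /= dickson_idx_row // => /eqP.
Qed.

Lemma dickson_mx_col_eq0 (c : nat -> L) (j : 'I_n) :
  (forall i, dickson_mx q n c i j = 0) -> dickson_mx q n c = 0.
Proof.
move=> col0; apply: dickson_mx_eq0 => k lt_kn.
have n_gt0 : (0 < n)%N by apply: leq_ltn_trans (ltn_ord j).
have /eqP := col0 (Ordinal (ltn_pmod (j + n - k) n_gt0)).
by rewrite dickson_mx_entry_eq0 /= dickson_idx_col // => /eqP.
Qed.

Lemma dickson_mx_rank1 (c : nat -> L) : \rank (dickson_mx q n c) = 1%N ->
  exists u v, [/\ forall i, u i != 0, forall j, v j != 0
                & forall i j, dickson_mx q n c i j = u i * v j].
Proof.
move=> rankC; have [u [v uv]] := rank1_factor rankC.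
have C_neq0 : dickson_mx q n c != 0 by apply/eqP=> C0; move: rankC; rewrite C0 mxrank0.
exists u, v; split=> // [i | j]; apply: contraNneq C_neq0 => w0; apply/eqP.
  by apply: (@dickson_mx_row_eq0 _ i) => j; rewrite uv w0 mul0r.
by apply: (@dickson_mx_col_eq0 _ j) => i; rewrite uv w0 mulr0.
Qed.

Lemma dickson_mx_add_diag (a : nat -> L) (d : L) : [pchar L].-nat q ->
  dickson_mx q n a + diag_mx (\row_(i < n) d ^+ (q ^ i))
    = dickson_mx q n (fun k => if k == 0%N then a 0%N + d else a k).
Proof.
move=> pchar_q; apply/matrixP => i j; rewrite !mxE dickson_idx_eq0.
have [<- | _] := eqVneq i j; last by rewrite mulr0n addr0.
by rewrite addKn modnn mulr1n exprDn_pchar // pnatX pchar_q.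
Qed.

End DicksonMatrix.

Section DiagSimilarOfCycles.
Variables (L : fieldType) (n : nat) (A B : 'M[L]_n).
Hypothesis n_gt0 : (0 < n)%N.
Hypothesis A_offdiag_neq0 : forall i j, i != j -> A i j != 0.
Hypothesis eq_diag : forall i, B i i = A i i.
Hypothesis eq_cycle2 : forall i j, i != j -> B i j * B j i = A i j * A j i.
Hypothesis eq_cycle3 : forall i j l, i != j -> i != l -> j != l ->
  B i j * B j l * B l i = A i j * A j l * A l i.

Lemma B_offdiag_neq0 i j : i != j -> B i j != 0.
Proof.
move=> neq_ij; apply/eqP => Bij0; have neq_ji : j != i by rewrite eq_sym.
have := mulf_neq0 (A_offdiag_neq0 neq_ij) (A_offdiag_neq0 neq_ji).
by rewrite -eq_cycle2 // Bij0 mul0r eqxx.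
Qed.

(* Scale column j by B_0j / A_0j, which makes the first rows of A and B agree; the 2- and
   3-cycle products through 0 then determine all remaining entries. *)
Lemma diag_similar_of_cycles : diag_similar A B.
Proof.
pose z : 'I_n := Ordinal n_gt0.
pose t : 'rV[L]_n := \row_j (if j == z then 1 else B z j / A z j).
have t_neq0 j : t 0 j != 0.
  rewrite mxE; have [_ | neq_jz] := eqVneq j z; first exact: oner_neq0.
  by rewrite mulf_neq0 ?invr_neq0 ?B_offdiag_neq0 ?A_offdiag_neq0 // eq_sym.
exists t; split => //.
have t_unit : diag_mx t \in unitmx.
  by rewrite unitmxE unitfE det_diag; apply/prodf_neq0 => j _.
suff conj_t : diag_mx t *m B = A *m diag_mx t by rewrite -mulmxA -conj_t mulKmx.
apply/matrixP => i j; rewrite mul_diag_mx mul_mx_diag !mxE.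
have [-> | neq_iz] := eqVneq i z; have [-> | neq_jz] := eqVneq j z.
- by rewrite eq_diag mul1r mulr1.
- by rewrite mul1r mulrCA mulfV ?mulr1 // A_offdiag_neq0 // eq_sym.
- rewrite mulr1 mulrAC eq_cycle2 ?[z == _]eq_sym //.
  by rewrite mulrAC mulfV ?mul1r // A_offdiag_neq0 // eq_sym.
- have [<- | neq_ij] := eqVneq i j; first by rewrite eq_diag mulrC.
  have [neq_zi neq_zj] : z != i /\ z != j by rewrite ![z == _]eq_sym.
  have Bij : B i j = A z i * A i j * A j z / (B z i * B j z).
    by rewrite -eq_cycle3 //; field; rewrite ?B_offdiag_neq0 // eq_sym.
  have Bjz : B j z = A z j * A j z / B z j.
    by rewrite -eq_cycle2 //; field; rewrite B_offdiag_neq0.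
  by rewrite Bij Bjz; field; rewrite ?B_offdiag_neq0 ?A_offdiag_neq0 // eq_sym.
Qed.

End DiagSimilarOfCycles.

Theorem mainTheorem10 (L : finFieldType) (q n : nat)
  (hq : (1 < q)%N) (hn : (0 < n)%N) (hL : #|L| = (q ^ n)%N)
  (A B : 'M[L]_n) :
  is_dickson q A -> is_dickson q B ->
  (exists d : L, \rank (A + diag_mx (\row_(i < n) d ^+ (q ^ i)))%R = 1%N) ->
  equal_principal_minors A B ->
  diag_similar A B.
Proof.
move=> [a defA] _ [d rank1] eqAB.
have pchar_q := pchar_nat_of_card_expn hn hL.
move: rank1; rewrite {1}defA dickson_mx_add_diag // => rank1.
have [u [v [u_neq0 v_neq0 uv]]] := dickson_mx_rank1 (ltnW hq) rank1.
have A_uv i j : i != j -> A i j = u i * v j.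
  move=> neq_ij; rewrite -uv -dickson_mx_add_diag // -defA.
  by rewrite !mxE (negbTE neq_ij) mulr0n addr0.
apply: diag_similar_of_cycles => //.
- by move=> i j neq_ij; rewrite A_uv // mulf_neq0.
- exact: eq_diag_of_principal_minors.
- exact: eq_cycle2_of_principal_minors.
move=> i j l neq_ij neq_il neq_jl; apply: eq_cycle3_of_principal_minors => //.
have [neq_ji neq_li neq_lj] : [/\ j != i, l != i & l != j] by rewrite !(eq_sym l) eq_sym.
by rewrite !A_uv //; ring.
Qed.
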